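(* Let $a,b,c\in\mathbb{R}$ with $ac>0$ and $b^2-4ac>0$. Let $\{P_m(z)\}_{m\geq 0}$ be the sequence of functions of $z$ generated by \[ \sum_{m=0}^\infty P_m(z)\, t^m=\frac{1}{(at^2+bt+c)(1-tz)}. \] Then for every $m\geq 0$, no zero of $P_m(z)$ lies in the closed disk $\{z\in\mathbb{C}: |z|\leq 1/|\alpha|\}$, where $\alpha$ is the zero of $at^2+bt+c$ of smallest modulus.
   Context: A sequence $\{P_m(z)\}$ is generated by $f(t,z)$ if, for each $z\in\mathbb{C}$, $f(t,z)$ is analytic in $t$ in a neighborhood of $t=0$ and $P_m(z)$ is the coefficient of $t^m$ in the power series expansion of $f(t,z)$ in $t$ about $0$. *)

From Stdlib Require Import Reals.
From Coquelicot Require Import Coquelicot.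
Open Scope C_scope.

Definition genf (a b c : R) (t z : C) : C :=
  / ((RtoC a * t * t + RtoC b * t + RtoC c) * (1 - t * z)).

Definition generated_by (P : nat -> C -> C) (f : C -> C -> C) : Prop :=
  forall z : C, exists r : R, (0 < r)%R /\
    forall t : C, (Cmod t < r)%R ->
      @is_pseries C_AbsRing C_NormedModule (fun m => P m z) t (f t z).

From Stdlib Require Import Reals Arith Lra Lia Psatz.
From Coquelicot Require Import Coquelicot.

(** The discriminant condition makes the roots alpha, beta of a t^2 + b t + c real,
    and a c > 0 gives rho := a alpha^2 / c = alpha / beta > 0.  Comparing coefficients in
    (a t^2 + b t + c) (1 - t z) f(t, z) = 1 shows that the s_n := P_n(z) - z P_(n-1)(z)
    satisfy c s_n + b s_(n-1) + a s_(n-2) = [n = 0], whose solution is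
    s_n = alpha^(-n) G_n / c with G_n = 1 + rho + ... + rho^n.  Hence
    P_m(z) = alpha^(-m) / c * sum_(j <= m) G_(m-j) (z alpha)^j, a polynomial in
    w = z alpha whose coefficients are positive, decreasing, and strictly decreasing at
    the first step.  By the Enestrom-Kakeya argument, Re ((1 - w) Q(w)) > 0 for such a
    polynomial Q when |w| <= 1 and w <> 1; since also Q(1) > 0, Q has no zero in the
    closed unit disk. *)

Open Scope R_scope.

Lemma Cproj_eq (u v : C) : Re u = Re v -> Im u = Im v -> u = v.
Proof. destruct u, v. simpl. intros -> ->. reflexivity. Qed.

Lemma RtoC_neq_0 (x : R) : x <> 0 -> RtoC x <> 0%C.
Proof. intros Hx H. exact (Hx (f_equal Re H)). Qed.

Lemma CV_radius_gt_0 (e : nat -> R) (r : R) :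
  0 < r -> (forall x, Rabs x < r -> ex_pseries e x) -> Rbar_lt 0 (CV_radius e).
Proof.
  intros Hr Hconv.
  destruct (Rbar_lt_le_dec (CV_radius e) (r / 2)) as [Hlt | Hle].
  - exfalso. apply (CV_disk_outside e (r / 2)).
    + rewrite Rabs_pos_eq by lra. exact Hlt.
    + destruct (Hconv (r / 2)) as [l Hl]; [rewrite Rabs_pos_eq; lra |].
      apply (is_lim_seq_ext (fun k => scal (pow_n (r / 2) k) (e k))).
      { intro k. rewrite pow_n_pow. apply Rmult_comm. }
      apply ex_series_lim_0. exists l. exact Hl.
  - eapply Rbar_lt_le_trans; [| exact Hle]. simpl. lra.
Qed.

Lemma pseries_coef_unique (e1 e2 : nat -> R) (g : R -> R) (r : R) : 0 < r ->
  (forall x, Rabs x < r -> is_pseries e1 x (g x) /\ is_pseries e2 x (g x)) ->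
  forall n, e1 n = e2 n.
Proof.
  intros Hr Hser n.
  apply PSeries_ext_recip.
  - apply (CV_radius_gt_0 _ r Hr). intros x Hx. exists (g x). apply Hser, Hx.
  - apply (CV_radius_gt_0 _ r Hr). intros x Hx. exists (g x). apply Hser, Hx.
  - exists (mkposreal r Hr). intros x Hx.
    assert (Hx' : Rabs x < r) by (rewrite <- (Rminus_0_r x); exact Hx).
    destruct (Hser x Hx') as [H1 H2].
    now rewrite (is_pseries_unique _ _ _ H1), (is_pseries_unique _ _ _ H2).
Qed.

Lemma pow_n_RtoC (x : R) (k : nat) : pow_n (K := C_Ring) (RtoC x) k = RtoC (x ^ k).
Proof.
  induction k as [| k IH]; [reflexivity |].
  simpl. rewrite IH. now rewrite RtoC_mult.
Qed.

Lemma is_pseries_real_linear (f : C -> R) (e : nat -> C) (x : R) (l : C) :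
  (forall u v, f (u + v)%C = f u + f v) -> (forall (t : R) u, f (t * u)%C = t * f u) ->
  filterlim f (locally l) (locally (f l)) ->
  is_pseries e (RtoC x) l -> is_pseries (fun n => f (e n)) x (f l).
Proof.
  intros Hadd Hscal Hcont Hser. unfold is_pseries, is_series in *.
  eapply filterlim_ext; [| eapply filterlim_comp; [exact Hser | exact Hcont]].
  assert (Hterm : forall k u, f (scal (pow_n (RtoC x) k) u) = scal (pow_n x k) (f u)).
  { intros k u. change (f (pow_n (K := C_Ring) (RtoC x) k * u)%C = pow_n x k * f u).
    rewrite pow_n_RtoC, Hscal. f_equal. }
  intro n. cbv beta.
  induction n as [| n IH].
  - rewrite !sum_O. apply Hterm.
  - rewrite !sum_Sn, <- IH, <- Hterm. apply Hadd.
Qed.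

Lemma filterlim_Re (l : C) : filterlim Re (locally l) (locally (Re l)).
Proof. intros P [eps HP]. exists eps. intros w [Hre _]. exact (HP _ Hre). Qed.

Lemma filterlim_Im (l : C) : filterlim Im (locally l) (locally (Im l)).
Proof. intros P [eps HP]. exists eps. intros w [_ Him]. exact (HP _ Him). Qed.

Lemma pseries_C_coef_unique (e1 e2 : nat -> C) (g : R -> C) (r : R) : 0 < r ->
  (forall x : R, Rabs x < r ->
     is_pseries e1 (RtoC x) (g x) /\ is_pseries e2 (RtoC x) (g x)) ->
  forall n, e1 n = e2 n.
Proof.
  intros Hr Hser n. apply Cproj_eq.
  - apply (pseries_coef_unique (fun k => Re (e1 k)) (fun k => Re (e2 k))
                                (fun x => Re (g x)) r Hr).
    intros x Hx. destruct (Hser x Hx) as [H1 H2].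
    split; apply is_pseries_real_linear; auto using re_scal_l, filterlim_Re.
  - apply (pseries_coef_unique (fun k => Im (e1 k)) (fun k => Im (e2 k))
                                (fun x => Im (g x)) r Hr).
    intros x Hx. destruct (Hser x Hx) as [H1 H2].
    split; apply is_pseries_real_linear; auto using im_scal_l, filterlim_Im.
Qed.

Definition PS_one (n : nat) : C := match n with O => 1 | S _ => 0 end.

Definition PS_mul_quad (a b c : C) (e : nat -> C) (n : nat) : C :=
  (c * e n + b * PS_incr_1 e n + a * PS_incr_1 (PS_incr_1 e) n)%C.

Lemma is_pseries_PS_one (x : C) : is_pseries PS_one x (1 : C).
Proof.
  apply (filterlim_ext (fun _ => 1 : C)); [| apply filterlim_const].
  intro n. induction n as [| n IH].
  - rewrite sum_O. change ((1 : C) = 1 * 1)%C. ring.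
  - rewrite sum_Sn, <- IH. change ((1 : C) = 1 + pow_n x (S n) * 0)%C. ring.
Qed.

Lemma is_pseries_mul_quad (a b c : C) (e : nat -> C) (x l : C) :
  is_pseries e x l -> is_pseries (PS_mul_quad a b c e) x ((a * x * x + b * x + c) * l)%C.
Proof.
  intro H0.
  pose proof (is_pseries_incr_1 _ _ _ H0) as H1.
  pose proof (is_pseries_incr_1 _ _ _ H1) as H2.
  pose proof (is_pseries_plus _ _ _ _ _
               (is_pseries_plus _ _ _ _ _
                 (is_pseries_scal c _ _ _ (Cmult_comm _ _) H0)
                 (is_pseries_scal b _ _ _ (Cmult_comm _ _) H1))
               (is_pseries_scal a _ _ _ (Cmult_comm _ _) H2)) as H.
  replace ((a * x * x + b * x + c) * l)%C
    with (c * l + b * (x * l) + a * (x * (x * l)))%C by ring.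
  exact H.
Qed.

Lemma PS_mul_quad_inj (a b c : C) (s u : nat -> C) : c <> 0%C ->
  (forall n, PS_mul_quad a b c s n = PS_mul_quad a b c u n) -> forall n, s n = u n.
Proof.
  intros Hc Heq n. induction n as [n IH] using lt_wf_ind.
  specialize (Heq n). unfold PS_mul_quad in Heq.
  assert (H1 : PS_incr_1 s n = PS_incr_1 u n).
  { destruct n as [| k]; [reflexivity |]. apply IH. lia. }
  assert (H2 : PS_incr_1 (PS_incr_1 s) n = PS_incr_1 (PS_incr_1 u) n).
  { destruct n as [| [| k]]; [reflexivity | reflexivity |]. apply IH. lia. }
  rewrite H1, H2 in Heq.
  set (B := (b * PS_incr_1 u n + a * PS_incr_1 (PS_incr_1 u) n)%C).
  replace (s n) with (/ c * ((c * s n + b * PS_incr_1 u n + a * PS_incr_1 (PS_incr_1 u) n) - B))%C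
    by (unfold B; field; exact Hc).
  rewrite Heq. unfold B. field. exact Hc.
Qed.

Definition geom_sum (rho : R) (n : nat) : R := sum_f_R0 (fun j => rho ^ j) n.

Lemma geom_sum_lt_S (rho : R) (n : nat) : 0 < rho -> geom_sum rho n < geom_sum rho (S n).
Proof.
  intro Hrho. change (geom_sum rho (S n)) with (geom_sum rho n + rho ^ S n).
  pose proof (pow_lt rho (S n) Hrho). lra.
Qed.

Lemma geom_sum_le (rho : R) (k l : nat) :
  0 < rho -> (k <= l)%nat -> geom_sum rho k <= geom_sum rho l.
Proof.
  intros Hrho Hkl. induction Hkl as [| l _ IH]; [lra |].
  pose proof (geom_sum_lt_S rho l Hrho). lra.
Qed.

Lemma geom_sum_ge_1 (rho : R) (n : nat) : 0 < rho -> 1 <= geom_sum rho n.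
Proof.
  intro Hrho. replace 1 with (geom_sum rho 0) by (unfold geom_sum; simpl; ring).
  apply geom_sum_le; [exact Hrho | lia].
Qed.

Lemma quadratic_ne0_near_0 (a b c x : R) : c <> 0 ->
  Rabs x < Rabs c / (Rabs a + Rabs b + Rabs c) -> a * x * x + b * x + c <> 0.
Proof.
  intros Hc Hx Hroot.
  pose proof (Rabs_pos_lt c Hc). pose proof (Rabs_pos a). pose proof (Rabs_pos b).
  pose proof (Rabs_pos x).
  apply (Rmult_lt_compat_r (Rabs a + Rabs b + Rabs c)) in Hx; [| lra].
  unfold Rdiv in Hx. rewrite Rmult_assoc, Rinv_l, Rmult_1_r in Hx by lra.
  assert (Hx1 : Rabs x < 1) by nra.
  assert (Hbound : Rabs (a * x * x + b * x) <= (Rabs a + Rabs b) * Rabs x).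
  { eapply Rle_trans; [apply Rabs_triang |]. rewrite !Rabs_mult.
    assert (0 <= Rabs a * Rabs x * (1 - Rabs x))
      by (apply Rmult_le_pos; [apply Rmult_le_pos |]; lra).
    lra. }
  replace (a * x * x + b * x) with (- c) in Hbound by lra.
  rewrite Rabs_Ropp in Hbound. nra.
Qed.

Lemma one_sub_mul_ne0 (u v : C) : Cmod u * Cmod v < 1 -> (1 - u * v)%C <> 0%C.
Proof.
  intros Huv H. assert (Huv1 : (u * v)%C = 1%C).
  { replace (u * v)%C with (1 - (1 - u * v))%C by ring. rewrite H. ring. }
  apply (f_equal Cmod) in Huv1. rewrite Cmod_mult, Cmod_1 in Huv1. lra.
Qed.

Lemma quadratic_root_real (a b c : R) (w : C) : a <> 0 -> 0 < b * b - 4 * a * c ->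
  (RtoC a * w * w + RtoC b * w + RtoC c = 0)%C -> w = RtoC (Re w).
Proof.
  intros Ha Hdisc Hroot.
  destruct w as [x y]. simpl.
  apply (f_equal Re) in Hroot as Hre. apply (f_equal Im) in Hroot as Him.
  simpl in Hre, Him.
  assert (Hy : y = 0).
  { destruct (Req_dec y 0) as [| Hy]; [assumption | exfalso].
    assert (Hvertex : 2 * a * x + b = 0) by (apply (Rmult_eq_reg_l y); [nra | exact Hy]).
    assert (0 < y * y) by (apply Rsqr_pos_lt, Hy).
    assert (0 < a * a) by (apply Rsqr_pos_lt, Ha).
    nra. }
  now subst y.
Qed.

Lemma PS_mul_quad_geom (a b c x0 : R) : c <> 0 -> x0 <> 0 -> a * x0 * x0 + b * x0 + c = 0 ->
  forall n, PS_mul_quad a b c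
              (fun k => RtoC (/ c) * (/ RtoC x0) ^ k * RtoC (geom_sum (a * x0 * x0 / c) k))%C n
            = PS_one n.
Proof.
  intros Hc Hx Hroot n.
  assert (Hb : b = - (c + a * x0 * x0) / x0) by (field_simplify_eq; [nra | exact Hx]).
  unfold PS_mul_quad, geom_sum.
  destruct n as [| [| n]]; cbn [PS_incr_1 PS_one]; rewrite <- ?(RtoC_inv x0 Hx), <- ?RtoC_pow;
    apply Cproj_eq; simpl; rewrite ?Hb; field; auto.
Qed.

Lemma genf_coef_recurrence (a b c : R) (P : nat -> C -> C) (z : C) : c <> 0 ->
  generated_by P (genf a b c) ->
  forall n, PS_mul_quad a b c (PS_mul_quad 0 (- z) 1 (fun m => P m z)) n = PS_one n.
Proof.
  intros Hc HP.
  destruct (HP z) as [r [Hr Hser]].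
  set (eps := Rmin r (Rmin (Rabs c / (Rabs a + Rabs b + Rabs c)) (/ (Cmod z + 1)))).
  assert (Heps : 0 < eps).
  { pose proof (Rabs_pos_lt c Hc). pose proof (Rabs_pos a). pose proof (Rabs_pos b).
    pose proof (Cmod_ge_0 z).
    unfold eps. repeat apply Rmin_glb_lt; auto.
    - apply Rdiv_lt_0_compat; lra.
    - apply Rinv_0_lt_compat. lra. }
  apply (pseries_C_coef_unique _ _ (fun _ => 1%C) eps Heps).
  intros x Hx. cbv beta. split; [| apply is_pseries_PS_one].
  assert (Hquad : a * x * x + b * x + c <> 0).
  { apply quadratic_ne0_near_0; [exact Hc |].
    eapply Rlt_le_trans; [exact Hx |]. eapply Rle_trans; [apply Rmin_r | apply Rmin_l]. }
  assert (Hlin : (1 - RtoC x * z)%C <> 0%C).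
  { apply one_sub_mul_ne0. rewrite Cmod_R.
    assert (Hxz : Rabs x < / (Cmod z + 1)).
    { eapply Rlt_le_trans; [exact Hx |]. eapply Rle_trans; apply Rmin_r. }
    pose proof (Cmod_ge_0 z). pose proof (Rabs_pos x).
    apply (Rmult_lt_compat_r (Cmod z + 1)) in Hxz; [| lra].
    rewrite Rinv_l in Hxz by lra. nra. }
  assert (Hxr : Cmod x < r) by (rewrite Cmod_R; eapply Rlt_le_trans; [exact Hx | apply Rmin_l]).
  pose proof (is_pseries_mul_quad a b c _ x _ (is_pseries_mul_quad 0 (- z) 1 _ x _ (Hser x Hxr)))
    as Hprod.
  replace ((RtoC a * x * x + RtoC b * x + RtoC c)
             * ((0 * x * x + (- z) * x + 1) * genf a b c x z))%C
    with (RtoC 1) in Hprod; [exact Hprod |].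
  unfold genf. field. split; [exact Hlin |].
  intro H. apply Hquad. apply (f_equal Re) in H. simpl in H. lra.
Qed.

Lemma genf_first_difference (a b c x0 : R) (P : nat -> C -> C) (z : C) :
  c <> 0 -> x0 <> 0 -> a * x0 * x0 + b * x0 + c = 0 -> generated_by P (genf a b c) ->
  forall n, PS_mul_quad 0 (- z) 1 (fun k => P k z) n
            = (RtoC (/ c) * (/ RtoC x0) ^ n * RtoC (geom_sum (a * x0 * x0 / c) n))%C.
Proof.
  intros Hc Hx0 Hroot HP.
  apply (PS_mul_quad_inj a b c); [apply RtoC_neq_0, Hc |].
  intro n. rewrite genf_coef_recurrence, PS_mul_quad_geom; auto.
Qed.

Definition poly_eval (d : nat -> R) (w : C) (n : nat) : C :=
  sum_n (fun j => RtoC (d j) * w ^ j)%C n.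

Lemma poly_eval_S (d : nat -> R) (w : C) (n : nat) :
  poly_eval d w (S n) = (d O + w * poly_eval (fun j => d (S j)) w n)%C.
Proof.
  unfold poly_eval. induction n as [| n IH].
  - rewrite sum_Sn, !sum_O.
    change (d 0%nat * 1 + d 1%nat * (w * 1) = d 0%nat + w * (d 1%nat * 1))%C. ring.
  - rewrite sum_Sn, IH, sum_Sn.
    change (d 0%nat + w * sum_n (fun j => d (S j) * w ^ j) n + d (S (S n)) * (w * w ^ S n)
            = d 0%nat + w * (sum_n (fun j => d (S j) * w ^ j) n + d (S (S n)) * w ^ S n))%C.
    ring.
Qed.

Lemma first_difference_solution (z alpha kappa : C) (g : nat -> R) (p : nat -> C) : alpha <> 0%C ->
  (forall n, PS_mul_quad 0 (- z) 1 p n = kappa * (/ alpha) ^ n * g n)%C ->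
  forall n, p n = (kappa * (/ alpha) ^ n * poly_eval (fun j => g (n - j)%nat) (z * alpha) n)%C.
Proof.
  intros Halpha Hp n. induction n as [| n IH].
  - specialize (Hp O). unfold PS_mul_quad in Hp. cbn [PS_incr_1] in Hp.
    unfold poly_eval. rewrite sum_O. simpl Nat.sub.
    transitivity (kappa * (/ alpha) ^ 0 * g 0%nat)%C; [| cbn [Cpow]; ring].
    rewrite <- Hp. change (@zero _) with (RtoC 0). ring.
  - specialize (Hp (S n)). unfold PS_mul_quad in Hp. cbn [PS_incr_1] in Hp.
    rewrite poly_eval_S. simpl Nat.sub.
    transitivity (kappa * (/ alpha) ^ S n * g (S n) + z * p n)%C.
    + rewrite <- Hp. ring.
    + rewrite IH, Cpow_S. field. exact Halpha.
Qed.

Lemma Re_Cpow_le_1 (w : C) (n : nat) : Cmod w <= 1 -> Re (w ^ n) <= 1.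
Proof.
  intro Hw. pose proof (re_le_Cmod (w ^ n)) as Hre. rewrite Cmod_pow in Hre.
  pose proof (pow_incr (Cmod w) 1 n (conj (Cmod_ge_0 w) Hw)) as Hpow. rewrite pow1 in Hpow.
  pose proof (Rle_abs (Re (w ^ n))). lra.
Qed.

Lemma Cmod_le_1_Re_ge_1 (w : C) : Cmod w <= 1 -> 1 <= Re w -> w = 1%C.
Proof.
  intros Hw Hre. pose proof (Cmod2_alt w) as Hmod. pose proof (Cmod_ge_0 w).
  assert (Him : Im w ^ 2 <= 0) by nra.
  destruct w as [x y]. simpl in *. unfold RtoC. f_equal; nra.
Qed.

Lemma Re_one_sub_mul_poly_eval (d : nat -> R) (w : C) (n : nat) :
  Cmod w <= 1 -> (forall j, d (S j) <= d j) ->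
  (d O - d 1%nat) * (1 - Re w) + d (S n) * (1 - Re (w ^ S (S n)))
    <= Re ((1 - w) * poly_eval d w (S n)).
Proof.
  intros Hw Hd. unfold poly_eval. induction n as [| n IH].
  - rewrite sum_Sn, sum_O. destruct w as [x y]. simpl. lra.
  - rewrite sum_Sn.
    set (F := sum_n (fun j => d j * w ^ j)%C (S n)) in *.
    set (W := (w ^ S (S n))%C) in *.
    change (w ^ S (S (S n)))%C with (w * W)%C.
    pose proof (Re_Cpow_le_1 w (S (S n)) Hw) as HW. fold W in HW.
    pose proof (Hd (S n)).
    destruct w as [x y], F as [f1 f2], W as [w1 w2]. simpl in *. nra.
Qed.

Lemma Re_poly_eval_1_ge (d : nat -> R) (n : nat) :
  (forall j, 0 <= d j) -> d O <= Re (poly_eval d 1 n).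
Proof.
  intro Hpos. unfold poly_eval. induction n as [| n IH].
  - rewrite sum_O, Cpow_1_l. simpl. lra.
  - rewrite sum_Sn, Cpow_1_l. change (plus ?u ?v) with (Cplus u v).
    rewrite re_plus, re_scal_r. simpl Re at 2.
    pose proof (Hpos (S n)). lra.
Qed.

Lemma poly_eval_ne0 (d : nat -> R) (w : C) (n : nat) : Cmod w <= 1 ->
  (forall j, 0 < d j) -> (forall j, d (S j) <= d j) -> ((0 < n)%nat -> d 1%nat < d O) ->
  poly_eval d w n <> 0%C.
Proof.
  intros Hw Hpos Hd Hstrict Hzero.
  destruct n as [| n].
  - apply (f_equal Re) in Hzero. unfold poly_eval in Hzero. rewrite sum_O in Hzero.
    simpl in Hzero. pose proof (Hpos O). lra.
  - assert (H01 : d 1%nat < d O) by (apply Hstrict; lia).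
    assert (Hw1 : w = 1%C).
    { apply (Cmod_le_1_Re_ge_1 _ Hw).
      pose proof (Re_one_sub_mul_poly_eval d w n Hw Hd) as Hlow.
      rewrite Hzero, Cmult_0_r in Hlow. change (Re 0) with 0 in Hlow.
      pose proof (Re_Cpow_le_1 w (S (S n)) Hw). pose proof (Hpos (S n)). nra. }
    subst w.
    assert (Hnonneg : forall j, 0 <= d j) by (intro j; apply Rlt_le, Hpos).
    pose proof (Re_poly_eval_1_ge d (S n) Hnonneg) as Hge.
    rewrite Hzero in Hge. simpl in Hge. pose proof (Hpos O). lra.
Qed.

Lemma poly_eval_geom_sum_ne0 (rho : R) (w : C) (m : nat) : 0 < rho -> Cmod w <= 1 ->
  poly_eval (fun j => geom_sum rho (m - j)) w m <> 0%C.
Proof.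
  intros Hrho Hw. apply poly_eval_ne0; [exact Hw | | |].
  - intro j. pose proof (geom_sum_ge_1 rho (m - j) Hrho). lra.
  - intro j. apply geom_sum_le; [exact Hrho | lia].
  - intro Hm. destruct m as [| k]; [lia |].
    simpl Nat.sub. rewrite Nat.sub_0_r. apply geom_sum_lt_S, Hrho.
Qed.

Lemma Rmult_sqr_div_pos (a c x : R) : 0 < a * c -> x <> 0 -> 0 < a * x * x / c.
Proof.
  intros Hac Hx.
  assert (Hc : c <> 0) by (intro; subst; lra).
  replace (a * x * x / c) with ((a * c) * (x * x) / (c * c)) by (field; exact Hc).
  apply Rdiv_lt_0_compat; [apply Rmult_lt_0_compat; [exact Hac |] |];
    apply Rsqr_pos_lt; assumption.
Qed.

Open Scope C_scope.

Theorem theorem2 (a b c : R) (hac : (0 < a * c)%R) (hdisc : (0 < b * b - 4 * a * c)%R)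
  (P : nat -> C -> C) (hP : generated_by P (genf a b c))
  (alpha : C)
  (halpha : RtoC a * alpha * alpha + RtoC b * alpha + RtoC c = 0)
  (hmin : forall beta : C, RtoC a * beta * beta + RtoC b * beta + RtoC c = 0 ->
            (Cmod alpha <= Cmod beta)%R) :
  forall (m : nat) (z : C), (Cmod z <= / Cmod alpha)%R -> P m z <> 0.
Proof.
  intros m z Hz.
  assert (Ha : a <> 0%R) by (intro; subst; lra).
  assert (Hc : c <> 0%R) by (intro; subst; lra).
  pose proof (quadratic_root_real a b c alpha Ha hdisc halpha) as Halpha_real.
  set (x0 := Re alpha) in *. rewrite Halpha_real in halpha, Hz. rewrite Cmod_R in Hz.
  assert (Hroot : (a * x0 * x0 + b * x0 + c = 0)%R).
  { apply (f_equal Re) in halpha. simpl in halpha. lra. }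
  assert (Hx0 : x0 <> 0%R) by (intro H0; rewrite H0 in Hroot; lra).
  rewrite (first_difference_solution z x0 (/ c)%R _ _ (RtoC_neq_0 _ Hx0)
             (genf_first_difference a b c x0 P z Hc Hx0 Hroot hP) m).
  apply Cmult_neq_0; [apply Cmult_neq_0 |].
  - apply RtoC_neq_0, Rinv_neq_0_compat, Hc.
  - apply Cpow_nz. rewrite <- (RtoC_inv _ Hx0). apply RtoC_neq_0, Rinv_neq_0_compat, Hx0.
  - apply poly_eval_geom_sum_ne0; [apply Rmult_sqr_div_pos; assumption |].
    rewrite Cmod_mult, Cmod_R. pose proof (Rabs_pos_lt x0 Hx0).
    apply (Rmult_le_compat_r (Rabs x0)) in Hz; [| lra].
    rewrite Rinv_l in Hz by lra. exact Hz.
Qed.
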